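(* Let $n\ge 3$ be odd and let $f=f_n$. If $x$ is an $n$-bit string of odd weight and $\overline{x}$ denotes its one's complement (the string obtained by flipping every bit of $x$), then $$f_n(\overline{x}) = f_n(x) + 2^{n-1}.$$
   Context: An $n$-bit string is $x=x_1x_2\cdots x_n$ with each $x_i\in\{0,1\}$; its (Hamming) weight is the number of $1$s. For distinct $n$-bit strings, $x<y$ in lexicographic order if there is $k$ with $x_j=y_j$ for all $j<k$ and $x_k<y_k$. Let $S_n^i$ be the sequence of all $n$-bit strings of weight $i$ listed in increasing lexicographic order, and $R_n^i$ the same strings listed in the reverse order (decreasing lexicographic order). Define the sequence $S_n$ as the concatenation $S_n=(R_n^1,R_n^3,R_n^5,\dots,R_n^{n-1},S_n^n,S_n^{n-2},\dots,S_n^4,S_n^2,S_n^0)$ if $n$ is even, and $S_n=(R_n^1,R_n^3,\dots,R_n^{n-2},R_n^n,S_n^{n-1},\dots,S_n^4,S_n^2,S_n^0)$ if $n$ is odd. Every $n$-bit string occurs exactly once in $S_n$; let $f_n$ be the bijection from $n$-bit strings to $\{1,\dots,2^n\}$ sending the string in position $j$ of $S_n$ to $j$. *)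

From mathcomp Require Import all_boot.
Set Implicit Arguments. Unset Strict Implicit. Unset Printing Implicit Defensive.

Fixpoint all_strings (n : nat) : seq (seq bool) :=
  if n is m.+1 then [seq false :: x | x <- all_strings m] ++
                    [seq true :: x | x <- all_strings m]
  else [:: [::]].

Definition weight (x : seq bool) : nat := count id x.

Fixpoint lexlt (x y : seq bool) : bool :=
  match x, y with
  | a :: x', b :: y' => (~~ a && b) || ((a == b) && lexlt x' y')
  | _, _ => false
  end.
Definition lexle (x y : seq bool) : bool := (x == y) || lexlt x y.

Definition Sni (n i : nat) : seq (seq bool) :=
  sort lexle [seq x <- all_strings n | weight x == i].
Definition Rni (n i : nat) : seq (seq bool) := rev (Sni n i).

Definition Sn (n : nat) : seq (seq bool) :=
  flatten [seq Rni n i | i <- [seq i <- iota 0 n.+1 | odd i]] ++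
  flatten [seq Sni n i | i <- rev [seq i <- iota 0 n.+1 | ~~ odd i]].

(* f_n x = position (1-based) of x in S_n *)
Definition fn (n : nat) (x : seq bool) : nat := (index x (Sn n)).+1.

Definition compl (x : seq bool) : seq bool := map negb x.

(** Complementation maps weight [i] to weight [n - i] and reverses the
    lexicographic order, so it sends [R_n^i] onto [S_n^(n-i)].  For odd [n]
    the even weights [n-1, n-3, ..., 0] are exactly [n - 1, n - 3, ..., n - n],
    hence the second half of [S_n] is the complement, term by term, of the
    first half.  The first half lists the [2^(n-1)] strings of odd weight, so
    complementing an odd-weight string moves it forward by [2^(n-1)]. *)

From mathcomp Require Import all_boot zify.

Lemma lexlt_trans {x y z} : lexlt x y -> lexlt y z -> lexlt x z.
Proof.
elim: x y z => [|a x IH] [|b y] [|c z] //=.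
by case: a; case: b; case: c => //=; apply: IH.
Qed.

Lemma lexltxx x : lexlt x x = false.
Proof. by elim: x => [|a x IH] //=; rewrite eqxx IH andbF; case: a. Qed.

Lemma lexle_trans : transitive lexle.
Proof.
move=> y x z /orP[/eqP->//|lt_xy] /orP[/eqP<-|lt_yz]; rewrite /lexle.
  by rewrite lt_xy orbT.
by rewrite (lexlt_trans lt_xy lt_yz) orbT.
Qed.

Lemma lexle_anti : antisymmetric lexle.
Proof.
move=> x y /andP[/orP[/eqP->//|lt_xy] /orP[/eqP->//|lt_yx]].
by have := lexlt_trans lt_xy lt_yx; rewrite lexltxx.
Qed.

Lemma lexle_total_eqsize x y : size x = size y -> lexle x y || lexle y x.
Proof.
rewrite /lexle; elim: x y => [|a x IH] [|b y] //= [] /IH.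
by rewrite !eqseq_cons; case: a; case: b; rewrite //= ?orbT.
Qed.

Lemma compl_inj : injective compl.
Proof. exact/inj_map/negb_inj. Qed.

Lemma complK : involutive compl.
Proof. by move=> x; rewrite /compl -map_comp map_id_in // => b _ /=; rewrite negbK. Qed.

Lemma size_compl x : size (compl x) = size x.
Proof. exact: size_map. Qed.

Lemma weight_compl x : weight (compl x) = size x - weight x.
Proof.
rewrite /weight /compl count_map -(count_predC id x) addKn.
by apply: eq_count; case.
Qed.

Lemma lexlt_compl x y : lexlt (compl x) (compl y) = lexlt y x.
Proof. by elim: x y => [|a x IH] [|b y] //=; rewrite IH; case: a; case: b. Qed.

Lemma lexle_compl x y : lexle (compl x) (compl y) = lexle y x.
Proof. by rewrite /lexle lexlt_compl (inj_eq compl_inj) eq_sym. Qed.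

Lemma mem_map_cons (T : eqType) (c b : T) (x : seq T) (l : seq (seq T)) :
  (b :: x \in map (cons c) l) = (b == c) && (x \in l).
Proof.
elim: l => [|y l IH]; first by rewrite andbF.
by rewrite /= in_cons IH eqseq_cons -andb_orr.
Qed.

Lemma mem_all_strings n x : (x \in all_strings n) = (size x == n).
Proof.
elim: n x => [|n IH] [|b x] //=; rewrite mem_cat.
  by apply/norP; split; apply/mapP => -[y _].
by rewrite !mem_map_cons IH eqSS; case: b; rewrite /= ?orbF.
Qed.

Lemma uniq_all_strings n : uniq (all_strings n).
Proof.
elim: n => [|n IH] //=; rewrite cat_uniq !map_inj_uniq // ?IH; try by move=> u v [].
by rewrite andbT; apply/hasPn => _ /mapP[u _ ->]; rewrite mem_map_cons.
Qed.

Lemma size_all_strings n : size (all_strings n) = 2 ^ n.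
Proof. by elim: n => [|n IH] //=; rewrite size_cat !size_map IH expnS mul2n addnn. Qed.

Lemma count_odd_weight n : count (odd \o weight) (all_strings n.+1) = 2 ^ n.
Proof.
rewrite /= count_cat !count_map -size_all_strings -(count_predC (odd \o weight)).
by congr (_ + _); apply: eq_count.
Qed.

Lemma mem_Sni n i x : (x \in Sni n i) = (size x == n) && (weight x == i).
Proof. by rewrite mem_sort mem_filter mem_all_strings andbC. Qed.

Lemma uniq_Sni n i : uniq (Sni n i).
Proof. by rewrite sort_uniq filter_uniq // uniq_all_strings. Qed.

Lemma sorted_Sni n i : sorted lexle (Sni n i).
Proof.
apply: (sort_sorted_in (P := [pred x | size x == n])).
  by move=> x y /eqP sx /eqP sy; apply: lexle_total_eqsize; rewrite sx sy.
by apply/allP => y; rewrite mem_filter mem_all_strings => /andP[].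
Qed.

Lemma Sni_compl n i : i <= n -> Sni n (n - i) = rev (map compl (Sni n i)).
Proof.
move=> le_in; apply: (sorted_eq lexle_trans lexle_anti (sorted_Sni _ _)).
  rewrite rev_sorted sorted_map.
  by apply: sub_sorted (sorted_Sni n i) => a b; rewrite /relpre /= lexle_compl.
rewrite perm_sym perm_rev perm_sym; apply: uniq_perm.
- exact: uniq_Sni.
- by rewrite (map_inj_uniq compl_inj) uniq_Sni.
move=> y; rewrite -{2}(complK y) (mem_map compl_inj) !mem_Sni size_compl weight_compl.
have := count_size id y; rewrite -/(weight y).
by case: eqP => [->|] //= le_wn; apply/eqP/eqP; lia.
Qed.

Definition odd_weights n := [seq i <- iota 0 n.+1 | odd i].

Definition odd_block n := flatten [seq Rni n i | i <- odd_weights n].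

Lemma rev_iota0 m : rev (iota 0 m.+1) = map (subn m) (iota 0 m.+1).
Proof.
elim: m => [|m IH] //.
transitivity (m.+1 :: rev (iota 0 m.+1)); first by rewrite -addn1 iotaD rev_cat.
change (iota 0 m.+2) with (0 :: iota (1 + 0) m.+1).
by rewrite IH iotaDl /= -map_comp; congr (_ :: _); apply: eq_map => i /=; rewrite add1n subSS.
Qed.

Lemma rev_even_weights n : odd n ->
  rev [seq i <- iota 0 n.+1 | ~~ odd i] = map (subn n) (odd_weights n).
Proof.
move=> odd_n; rewrite -filter_rev rev_iota0 filter_map.
congr map; apply: eq_in_filter => i; rewrite mem_iota add0n ltnS /= => le_in.
by rewrite oddB // odd_n; case: (odd i).
Qed.

Lemma Sn_odd n : odd n -> Sn n = odd_block n ++ map compl (odd_block n).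
Proof.
move=> odd_n; rewrite /Sn rev_even_weights // map_flatten -!map_comp.
congr (_ ++ flatten _); apply/eq_in_map => i.
rewrite mem_filter mem_iota ltnS => /andP[_ le_in] /=.
by rewrite Sni_compl // /Rni map_rev.
Qed.

Lemma mem_odd_block n x : (x \in odd_block n) = (size x == n) && odd (weight x).
Proof.
apply/flatten_mapP/andP => [[i]|[/eqP size_x odd_w]].
  by rewrite mem_filter mem_rev mem_Sni => /andP[odd_i _] /andP[-> /eqP->].
exists (weight x); last by rewrite mem_rev mem_Sni size_x !eqxx.
by rewrite mem_filter mem_iota odd_w ltnS -size_x count_size.
Qed.

Lemma sumn_count_fibers (T U : eqType) (f : T -> U) (s : seq T) (l : seq U) :
  uniq l -> sumn [seq count (fun x => f x == i) s | i <- l] =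
            count (fun x => f x \in l) s.
Proof.
elim: l => [|a l IH] /=; first by rewrite count_pred0.
case/andP => a_notin_l /IH->.
have disjoint_a_l : count (predI (fun x => f x == a) (fun x => f x \in l)) s = 0.
  by rewrite -(count_pred0 s); apply: eq_count => x /=; case: eqP => // ->; exact: negbTE.
rewrite -count_predUI disjoint_a_l addn0.
by apply: eq_count => x; rewrite /= in_cons.
Qed.

Lemma size_odd_block n : size (odd_block n.+1) = 2 ^ n.
Proof.
rewrite size_flatten /shape -map_comp -count_odd_weight.
under eq_map => i do rewrite /= size_rev size_sort size_filter.
rewrite sumn_count_fibers ?filter_uniq ?iota_uniq //.
apply: eq_in_count => y; rewrite mem_all_strings => /eqP size_y.
by rewrite mem_filter mem_iota ltnS -size_y count_size /= andbT.
Qed.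

Theorem mainTheorem1 (n : nat) (x : seq bool) :
  3 <= n -> odd n -> size x = n -> odd (weight x) ->
  fn n (compl x) = fn n x + 2 ^ n.-1.
Proof.
move=> le3n odd_n size_x odd_w.
have x_in : x \in odd_block n by rewrite mem_odd_block size_x eqxx.
have cx_notin : compl x \notin odd_block n.
  by rewrite mem_odd_block weight_compl oddB ?count_size // size_x odd_n odd_w andbF.
have size_block : size (odd_block n) = 2 ^ n.-1.
  by case: n le3n {odd_n size_x x_in cx_notin} => // m _; rewrite size_odd_block.
rewrite /fn Sn_odd // !index_cat x_in (negbTE cx_notin) (index_map compl_inj).
by rewrite size_block addnC addSn.
Qed.
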